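(* Let $R$, $G$, $*$, $\sigma$ and $\mathcal{S}$ be as in the context. If $\mathcal{S}$ is anticommutative, then $(x^2,y)=1$ for all $x,y\in G\setminus G_*$.
   Context: Throughout, $R$ is a commutative ring with unity with $\operatorname{char}(R)\neq 2$, and $\mathcal{U}(R)$ is its unit group. $G$ is a group with an involution $*$, i.e. a map $x\mapsto x^*$ with $(xy)^*=y^*x^*$ and $(x^* )^*=x$. The map $\sigma:G\to\mathcal{U}(R)$ is a nontrivial group homomorphism with kernel $N=\ker\sigma$, and it is compatible with $*$: $xx^*\in N$ for all $x\in G$. The group ring $RG$ carries the involution $\left(\sum_{x\in G}\alpha_x x\right)^{\sigma*}=\sum_{x\in G}\sigma(x)\alpha_x x^*$. Write $G_*=\{x\in G: x^*=x\}$ and $N_*=G_*\cap N$. Let $\mathcal{S}$ be the $R$-submodule of $RG$ spanned by the union of the following three sets: - $2\mathcal{S}_1=\{2x: x\in N_*\}$; - $\mathcal{S}_2=\{\alpha x: x\in G_*\setminus N,\ \alpha\in R,\ \alpha(1-\sigma(x))=0\}$; - $\mathcal{S}_3=\{x+\sigma(x)x^*: x\in G\setminus G_*\}$. $\mathcal{S}$ is called anticommutative if $ab+ba=0$ for all $a,b\in\mathcal{S}$. The commutator is $(x,y)=x^{-1}y^{-1}xy$. *)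

(* Possibly infinite groups are MathComp's [groupType]
   (boot/monoid.v); the group ring RG is modelled by formal finite sums. *)
From HB Require Import structures.
From mathcomp Require Import all_boot all_order all_algebra.
Set Implicit Arguments. Unset Strict Implicit. Unset Printing Implicit Defensive.
Import GRing.Theory.

Section GroupRing.
Variables (R : comNzRingType) (G : groupType).

Definition fsum := seq (R * G).

(* coefficient of g in a formal sum: an element of RG is determined by it *)
Definition coef (a : fsum) (g : G) : R := (\sum_(p <- a | p.2 == g) p.1)%R.

Definition rg_eq (a b : fsum) : Prop := forall g, coef a g = coef b g.

Definition rg_add (a b : fsum) : fsum := a ++ b.
Definition rg_scale (r : R) (a : fsum) : fsum := [seq ((r * p.1)%R, p.2) | p <- a].
Definition rg_mul (a b : fsum) : fsum :=
  [seq ((p.1 * q.1)%R, (p.2 * q.2)%g) | p <- a, q <- b].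

Variables (sigma : G -> R) (star : G -> G).

Definition S_gen (v : fsum) : Prop :=
  (exists x : G, [/\ star x = x, sigma x = 1%R & v = [:: ((2%:R)%R, x)]])
  \/ (exists x : G, exists alpha : R,
        [/\ star x = x, sigma x <> 1%R, (alpha * (1 - sigma x))%R = 0%R
          & v = [:: (alpha, x)]])
  \/ (exists x : G, star x <> x /\ v = [:: (1%R, x); (sigma x, star x)]).

Definition in_S (v : fsum) : Prop :=
  exists gs : seq (R * fsum),
    (forall c, c \in gs -> S_gen c.2) /\
    rg_eq v (flatten [seq rg_scale c.1 c.2 | c <- gs]).

Definition S_anticommutative : Prop :=
  forall a b, in_S a -> in_S b -> rg_eq (rg_add (rg_mul a b) (rg_mul b a)) [::].

End GroupRing.

(* Write a = x + sigma(x) x* for x outside G_*.  Reading off coefficients of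
   2a^2 = 0 gives x*^2 = x^2, 2 + 2 sigma(x)^2 = 0 and 4 = 0, so 2x^2 lies in S
   (in 2S_1 or in S_2).  If 2g is in S, anticommuting it with y + sigma(y) y*
   and looking at the coefficient of g y shows that y commutes with g, or else
   y* g = g y and 2 + 2 sigma(y) = 0.  Applied to g = x^2, the second case makes
   x^2 y symmetric with 2x^2 y in S; applying the same dichotomy to g = x^2 y and
   x then forces y x^2 = x^2 y. *)
From HB Require Import structures.
From mathcomp Require Import all_boot all_order all_algebra.
From mathcomp Require Import ring.
Set Implicit Arguments. Unset Strict Implicit. Unset Printing Implicit Defensive.
Import GRing.Theory.
Local Open Scope ring_scope.

Lemma coef_nil (R : comNzRingType) (G : groupType) (g : G) :
  coef ([::] : fsum R G) g = 0.
Proof. by rewrite /coef big_nil. Qed.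

Lemma coef_cons (R : comNzRingType) (G : groupType) (r : R) (h : G) a g :
  coef ((r, h) :: a) g = (if h == g then r else 0) + coef a g.
Proof. by rewrite /coef big_cons /=; case: (h == g); rewrite ?add0r. Qed.

Lemma S_gen_in_S (R : comNzRingType) (G : groupType) (sigma : G -> R) star v :
  S_gen sigma star v -> in_S sigma star v.
Proof.
move=> Sv; exists [:: (1, v)]; split; first by move=> c; rewrite inE => /eqP ->.
move=> g; rewrite /= cats0 /rg_scale /coef.
elim: v {Sv} => [|[r h] v IHv]; first by rewrite !big_nil.
by rewrite /= !big_cons /= mul1r IHv.
Qed.

Section AnticommutativeS.

Variables (R : comNzRingType) (G : groupType) (star : G -> G) (sigma : G -> R).
Hypothesis charR : (2%N \notin [pchar R])%R.
Hypothesis star_mul : forall x y : G, star (x * y)%g = (star y * star x)%g.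
Hypothesis sigma_one : sigma 1%g = 1.
Hypothesis sigma_mul : forall x y : G, sigma (x * y)%g = sigma x * sigma y.
Hypothesis S_anti : S_anticommutative sigma star.

Local Notation in_S := (in_S sigma star).

Definition pair_gen (x : G) : fsum R G := [:: (1, x); (sigma x, star x)].

Lemma two_neq0 : 2%:R != 0 :> R.
Proof. by move: charR; rewrite inE. Qed.

Lemma mul_sigma_eq0 (r : R) (g : G) : r * sigma g = 0 -> r = 0.
Proof.
move=> rg0; have := congr1 (fun z => z * sigma g^-1%g) rg0.
by rewrite mul0r -mulrA -sigma_mul mulgV sigma_one mulr1.
Qed.

Lemma pair_gen_in_S x : star x <> x -> in_S (pair_gen x).
Proof. by move=> nx; apply: S_gen_in_S; right; right; exists x. Qed.

Lemma twice_in_S g :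
  star g = g -> 2%:R * (1 - sigma g) = 0 -> in_S [:: (2%:R, g)].
Proof.
move=> sg s2g; apply: S_gen_in_S; have [sg1|sg1] := eqVneq (sigma g) 1.
  by left; exists g.
by right; left; exists g, 2%:R; split => //; apply/eqP.
Qed.

Lemma coef_anticomm a b g :
  in_S a -> in_S b -> coef (rg_add (rg_mul a b) (rg_mul b a)) g = 0.
Proof. by move=> Sa Sb; rewrite (S_anti Sa Sb g) coef_nil. Qed.

Lemma nonsym_sqr x : star x <> x ->
  (star x * star x = x * x)%g /\ 2%:R + 2%:R * (sigma x * sigma x) = 0.
Proof.
move=> nx; have := coef_anticomm (x * x)%g (pair_gen_in_S nx) (pair_gen_in_S nx).
rewrite /rg_add /rg_mul /= !coef_cons coef_nil eqxx.
have -> : (x * star x == x * x)%g = false by apply/eqP => /mulgI.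
have -> : (star x * x == x * x)%g = false by apply/eqP => /mulIg.
case: eqP => [-> E|_ E]; first by split=> //; rewrite -E; ring.
by case/eqP: two_neq0; rewrite -E; ring.
Qed.

Lemma four_eq0 x : star x <> x -> 4%:R = 0 :> R.
Proof.
move=> nx; have [xx _] := nonsym_sqr nx.
have := coef_anticomm (x * star x)%g (pair_gen_in_S nx) (pair_gen_in_S nx).
rewrite /rg_add /rg_mul /= !coef_cons coef_nil eqxx xx.
have -> : (x * x == x * star x)%g = false by apply/eqP => /mulgI /esym.
case: eqP => _ E; apply: (@mul_sigma_eq0 _ x); first by rewrite -E; ring.
by case/eqP: two_neq0; apply: (@mul_sigma_eq0 _ x); rewrite -E; ring.
Qed.

Lemma twice_sqr_in_S x : star x <> x -> in_S [:: (2%:R, (x * x)%g)].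
Proof.
move=> nx; have [xx sx2] := nonsym_sqr nx.
apply: twice_in_S; first by rewrite star_mul xx.
rewrite sigma_mul.
have -> : 2%:R * (1 - sigma x * sigma x) = 4%:R - (2%:R + 2%:R * (sigma x * sigma x)) :> R
  by ring.
by rewrite (four_eq0 nx) sx2 subrr.
Qed.

(* The coefficient of g y in 2g (y + sigma(y) y* ) + (y + sigma(y) y* ) 2g. *)
Lemma anticomm_twice_pair g y : in_S [:: (2%:R, g)] -> star y <> y ->
  (y * g = g * y)%g \/ (star y * g = g * y)%g /\ 2%:R + 2%:R * sigma y = 0.
Proof.
move=> Sg ny; have := coef_anticomm (g * y)%g Sg (pair_gen_in_S ny).
rewrite /rg_add /rg_mul /= !coef_cons coef_nil eqxx.
have -> : (g * star y == g * y)%g = false by apply/eqP => /mulgI.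
case: eqP => [yg _|_ ]; first by left.
case: eqP => [syg E|_ E]; first by right; split=> //; rewrite -E; ring.
by case/eqP: two_neq0; rewrite -E; ring.
Qed.

Lemma commute_sqr_nonsym x y : star x <> x -> star y <> y ->
  (x * x * y = y * (x * x))%g.
Proof.
move=> nx ny; have [xx sx2] := nonsym_sqr nx; set c := (x * x)%g.
have [//|[yc sy2]] := anticomm_twice_pair (twice_sqr_in_S nx) ny.
have Scy : in_S [:: (2%:R, (c * y)%g)].
  apply: twice_in_S; first by rewrite star_mul star_mul xx yc.
  set s := sigma x; set t := sigma y; rewrite !sigma_mul -/s -/t.
  have -> : 2%:R * (1 - s * s * t) = (2%:R + 2%:R * t) - t * (2%:R + 2%:R * (s * s)) :> R
    by ring.
  by rewrite sx2 sy2 mulr0 subrr.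
have xc : commute x c by rewrite /commute /c !mulgA.
have sxc : commute (star x) c by rewrite /commute /c -xx !mulgA.
case: (anticomm_twice_pair Scy nx) => [xcy|[sxcy _]].
  have xy : (x * y = y * x)%g.
    by apply/(mulgI c); rewrite mulgA -xc -mulgA xcy -mulgA.
  by rewrite -mulgA xy mulgA xy -mulgA.
have sxy : (star x * y = y * x)%g.
  by apply/(mulgI c); rewrite mulgA -sxc -mulgA sxcy mulgA.
by rewrite /c -{1}xx -mulgA sxy mulgA sxy -mulgA.
Qed.

End AnticommutativeS.

Theorem lemma3p8 (R : comNzRingType) (G : groupType)
  (charR : (2%N \notin [pchar R])%R)
  (star : G -> G)
  (star_mul : forall x y : G, star (x * y)%g = (star y * star x)%g)
  (star_invol : forall x : G, star (star x) = x)
  (sigma : G -> R)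
  (sigma_one : sigma 1%g = 1%R)
  (sigma_mul : forall x y : G, sigma (x * y)%g = (sigma x * sigma y)%R)
  (sigma_nontriv : exists x : G, sigma x <> 1%R)
  (sigma_compat : forall x : G, sigma (x * star x)%g = 1%R) :
  S_anticommutative sigma star ->
  forall x y : G, star x <> x -> star y <> y ->
    ((x * x)^-1 * y^-1 * (x * x) * y)%g = 1%g.
Proof.
move=> S_anti x y nx ny.
have cxy := commute_sqr_nonsym charR star_mul sigma_one sigma_mul S_anti nx ny.
by rewrite -mulgA cxy mulgA mulgVK mulVg.
Qed.
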